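(* Let $X$ be a metric space, $\mathcal M=\{M_1,\dots,M_n\}\subset\mathcal P^f_{\mathrm{Cl}}(X)$, $\Sigma(\mathcal M)\ne\emptyset$ and $d\in\Omega(\mathcal M)$. Then $K_d\in\Sigma_d(\mathcal M)$ and $K\subset K_d$ for every $K\in\Sigma_d(\mathcal M)$; i.e. $K_d$ is the greatest element of $\Sigma_d(\mathcal M)$ with respect to inclusion.
   Context: For a metric space $X$, $p\in X$, $A\subset X$: $|p\,A|=\inf_{a\in A}|p\,a|$ ($=\infty$ if $A=\emptyset$); for $0\le r<\infty$, $B_r(A)=\{p:|p\,A|\le r\}$. For nonempty $A,B$, $d_H(A,B)=\max\{\sup_{a\in A}|a\,B|,\sup_{b\in B}|b\,A|\}\in[0,\infty]$. $\mathcal P_{\mathrm{Cl}}(X)$ is the set of nonempty closed subsets of $X$ with $d_H$. A finiteness class of $\mathcal P_{\mathrm{Cl}}(X)$ is an equivalence class of the relation $A\sim B\iff d_H(A,B)<\infty$; $\mathcal P^f_{\mathrm{Cl}}(X)$ denotes a fixed finiteness class. For finite $\mathcal M=\{M_1,\dots,M_n\}\subset\mathcal P^f_{\mathrm{Cl}}(X)$, set $S_{\mathcal M}(Y)=\sum_{i=1}^n d_H(Y,M_i)$ for $Y\in\mathcal P^f_{\mathrm{Cl}}(X)$; $\Sigma(\mathcal M)$ is the set of all minimizers of $S_{\mathcal M}$ over $\mathcal P^f_{\mathrm{Cl}}(X)$. For $K\in\Sigma(\mathcal M)$, $d(K)=(d_H(K,M_1),\dots,d_H(K,M_n))$; $\Omega(\mathcal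 M)=\{d(K):K\in\Sigma(\mathcal M)\}$; for $d=(d_1,\dots,d_n)\in\Omega(\mathcal M)$, $\Sigma_d(\mathcal M)=\{K\in\Sigma(\mathcal M):d(K)=d\}$, partially ordered by inclusion; and $K_d=\bigcap_{i=1}^n B_{d_i}(M_i)$. *)

From HB Require Import structures.
From mathcomp Require Import all_boot all_order all_algebra.
From mathcomp Require Import all_classical all_reals.
From mathcomp Require Import ereal.
Set Implicit Arguments. Unset Strict Implicit. Unset Printing Implicit Defensive.
Import Order.TTheory GRing.Theory Num.Theory.
Local Open Scope classical_set_scope.
Local Open Scope ring_scope.

Section Defs.
Variables (R : realType) (T : Type) (dist : T -> T -> R).

Definition is_metric : Prop :=
  [/\ forall x y, 0 <= dist x y,
      forall x y, dist x y = 0 <-> x = y,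
      forall x y, dist x y = dist y x &
      forall x y z, dist x z <= dist x y + dist y z].

Definition mopen (U : set T) : Prop :=
  forall x, U x -> exists r : R, 0 < r /\ [set y | dist x y < r] `<=` U.
Definition mclosed (A : set T) : Prop := mopen (~` A).

(* |p A| = inf_{a in A} |p a|  (= +oo when A is empty) *)
Definition dist_pt (p : T) (A : set T) : \bar R :=
  ereal_inf [set (dist p a)%:E | a in A].

Definition mball (r : R) (A : set T) : set T :=
  [set p | (dist_pt p A <= r%:E)%E].

Definition dH (A B : set T) : \bar R :=
  Order.max (ereal_sup [set dist_pt a B | a in A])
            (ereal_sup [set dist_pt b A | b in B]).

Definition PCl (A : set T) : Prop := mclosed A /\ A !=set0.

(* the finiteness class of P_Cl(X) containing F0 *)
Definition in_class (F0 Y : set T) : Prop := PCl Y /\ (dH Y F0 < +oo)%E.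

Variables (F0 : set T) (n : nat) (M : 'I_n -> set T).

Definition SM (Y : set T) : \bar R := (\sum_(i < n) dH Y (M i))%E.

Definition Sigma (K : set T) : Prop :=
  in_class F0 K /\ forall Y, in_class F0 Y -> (SM K <= SM Y)%E.

(* d(K) = (d_H(K, M_1), ..., d_H(K, M_n)) (finite for K in the class) *)
Definition dvec (K : set T) : 'I_n -> R := fun i => fine (dH K (M i)).

Definition Omega (d : 'I_n -> R) : Prop := exists K, Sigma K /\ dvec K = d.

Definition Sigma_d (d : 'I_n -> R) (K : set T) : Prop := Sigma K /\ dvec K = d.

Definition Kd (d : 'I_n -> R) : set T := [set p | forall i, mball (d i) (M i) p].

End Defs.

From mathcomp Require Import all_boot all_order all_algebra.
From mathcomp Require Import all_classical all_reals.
From mathcomp Require Import ereal.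
From mathcomp Require Import lra.
Import Order.TTheory GRing.Theory Num.Theory.
Local Open Scope classical_set_scope.
Local Open Scope ring_scope.

Set Implicit Arguments. Unset Strict Implicit.

(* If K is a minimizer with distance vector d, every point of K lies within
   d_i of M_i, so K is contained in K_d; since K_d is closed and sandwiched
   between K and a bounded neighbourhood of M_1, it lies in the finiteness
   class.  Every point of M_i is within d_i of K, hence of K_d, and every point
   of K_d is within d_i of M_i, so d_H(K_d, M_i) <= d_i for all i.  As
   S_M(K) = sum d_i is minimal, all these inequalities are equalities: K_d is
   a minimizer with distance vector d. *)

Section Metric.
Variables (R : realType) (T : Type) (dist : T -> T -> R).
Hypothesis hdist : is_metric dist.

Local Open Scope ereal_scope.

Lemma dist_pt_ge0 p A : 0 <= dist_pt dist p A.
Proof.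
by apply: le_ereal_inf_tmp => _ [a _ <-]; rewrite lee_fin; case: hdist.
Qed.

Lemma dist_pt_le p (A : set T) a : A a -> dist_pt dist p A <= (dist p a)%:E.
Proof. by move=> Aa; apply: ereal_inf_lbound; exists a. Qed.

Lemma le_dist_pt p (A B : set T) :
  A `<=` B -> dist_pt dist p B <= dist_pt dist p A.
Proof.
by move=> AB; apply: ereal_inf_le_tmp => _ [a Aa <-]; exists a => //; apply: AB.
Qed.

Lemma dist_pt_ltP p (A : set T) r :
  dist_pt dist p A < r%:E -> exists2 a, A a & (dist p a < r)%R.
Proof. by case/ereal_inf_lt => _ [a Aa <-]; rewrite lte_fin => ?; exists a. Qed.

Lemma dist_pt_triangle p q A :
  dist_pt dist p A <= (dist p q)%:E + dist_pt dist q A.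
Proof.
case Eq: (dist_pt dist q A) => [s| |]; last 2 first.
- by rewrite addey // leey.
- by have := dist_pt_ge0 q A; rewrite Eq.
apply/lee_addgt0Pr => e e0.
have [a Aa qa] : exists2 a, A a & (dist q a < s + e)%R.
  by apply: dist_pt_ltP; rewrite Eq lte_fin ltrDl.
apply: le_trans (dist_pt_le p Aa) _.
rewrite -!EFinD lee_fin; case: hdist => _ _ _ tri; have := tri p q a; lra.
Qed.

Lemma mball_closed r A : mclosed dist (mball dist r A).
Proof.
move=> p /= np; have rp : r%:E < dist_pt dist p A by rewrite ltNge; apply/negP.
case Ep: (dist_pt dist p A) rp => [s| |] rp; last 2 first.
- exists 1%R; split => // y _ Ay.
  have := le_trans (dist_pt_triangle p y A) (leeD2l (dist p y)%:E Ay).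
  by rewrite Ep -EFinD leNgt ltry.
- by have := dist_pt_ge0 p A; rewrite Ep.
exists (s - r)%R; split; first by rewrite subr_gt0 -lte_fin.
move=> y /= py Ay.
have := le_trans (dist_pt_triangle p y A) (leeD2l (dist p y)%:E Ay).
by rewrite Ep -EFinD lee_fin; lra.
Qed.

Lemma Kd_closed n (M : 'I_n -> set T) d : mclosed dist (Kd dist M d).
Proof.
move=> p /= Kdp.
have [i ip] : exists i, ~ mball dist (d i) (M i) p by apply/existsNP.
have [r [r0 sub]] := mball_closed ip.
by exists r; split => // y py Kdy; apply: (sub y py); apply: Kdy.
Qed.

Lemma dH_ge_distl (A B : set T) a : A a -> dist_pt dist a B <= dH dist A B.
Proof. by move=> Aa; rewrite /dH le_max ereal_sup_ubound //; exists a. Qed.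

Lemma dH_ge_distr (A B : set T) b : B b -> dist_pt dist b A <= dH dist A B.
Proof. by move=> Bb; rewrite /dH le_max orbC ereal_sup_ubound //; exists b. Qed.

Lemma dH_ge0 (A B : set T) : A !=set0 -> 0 <= dH dist A B.
Proof. by case=> a Aa; apply: le_trans (dH_ge_distl B Aa); apply: dist_pt_ge0. Qed.

Lemma dHC (A B : set T) : dH dist A B = dH dist B A.
Proof. by rewrite /dH maxC. Qed.

Lemma dH_le (A B : set T) c :
  (forall a, A a -> dist_pt dist a B <= c) ->
  (forall b, B b -> dist_pt dist b A <= c) -> dH dist A B <= c.
Proof.
move=> hA hB; rewrite /dH ge_max.
by apply/andP; split; apply: ge_ereal_sup => _ [x Ax <-]; auto.
Qed.

Lemma in_class_refl F0 : PCl dist F0 -> in_class dist F0 F0.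
Proof.
move=> F0cl; split => //; apply: (@le_lt_trans _ _ 0); last exact: ltry.
apply: dH_le => a F0a; apply: le_trans (dist_pt_le a F0a) _;
  by case: hdist => _ dist0 _ _; rewrite (proj2 (dist0 a a)).
Qed.

Lemma in_class_sandwich F0 (K A B : set T) r :
  PCl dist K -> (dH dist K F0 < +oo) -> mclosed dist A ->
  K `<=` A -> A `<=` mball dist r B -> B !=set0 -> (dH dist B F0 < +oo) ->
  in_class dist F0 A.
Proof.
move=> [_ [k Kk]] KF0 Acl KA AB [b Bb] BF0.
have K0 : K !=set0 by exists k.
have B0 : B !=set0 by exists b.
have r_ge0 : (0 <= r)%R.
  by rewrite -lee_fin; apply: le_trans (AB k (KA k Kk)); apply: dist_pt_ge0.
split; first by split => //; exists k; apply: KA.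
apply: (@le_lt_trans _ _ ((r + 1)%:E + dH dist B F0 + dH dist K F0)); last first.
  by apply: lte_add_pinfty => //; apply: lte_add_pinfty => //; apply: ltry.
apply: dH_le => [a Aa|c F0c].
- rewrite lee_paddr ?dH_ge0 //.
  have [b' Bb' ab'] : exists2 b', B b' & (dist a b' < r + 1)%R.
    by apply: dist_pt_ltP; apply: le_lt_trans (AB a Aa) _; rewrite lte_fin ltrDl.
  apply: le_trans (dist_pt_triangle a b' F0) _.
  by rewrite leeD ?dH_ge_distl // lee_fin ltW.
- rewrite lee_paddl ?adde_ge0 ?dH_ge0 ?lee_fin ?addr_ge0 //.
  by apply: le_trans (le_dist_pt c KA) _; apply: dH_ge_distr.
Qed.

End Metric.

Section Minimizers.
Variables (R : realType) (T : Type) (dist : T -> T -> R).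
Hypothesis hdist : is_metric dist.
Variables (F0 : set T) (n : nat) (M : 'I_n -> set T).
Hypotheses (hF0 : PCl dist F0) (hM : forall i, in_class dist F0 (M i)).

Local Open Scope ereal_scope.

Lemma dH_Sigma K i : Sigma dist F0 M K -> dH dist K (M i) = (dvec dist M K i)%:E.
Proof.
move=> [[[_ Kne] _] Kmin].
have SMK : SM dist M K < +oo.
  apply: le_lt_trans (Kmin F0 (in_class_refl hdist hF0)) _.
  by apply: lte_sum_pinfty => j _; rewrite dHC; exact: (hM j).2.
have dHK_ge0 j : 0 <= dH dist K (M j) by apply: dH_ge0.
rewrite /dvec fineK // ge0_fin_numE //; apply: le_lt_trans SMK.
by rewrite /SM (bigD1 i) //= lee_paddr ?sume_ge0.
Qed.

Lemma Sigma_d_sub_Kd d K : Sigma_d dist F0 M d K -> K `<=` Kd dist M d.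
Proof.
move=> [KSigma <-] p Kp i; rewrite /mball /= -dH_Sigma //.
exact: dH_ge_distl.
Qed.

Lemma Sigma_d_Kd d K : (0 < n)%N ->
  Sigma_d dist F0 M d K -> Sigma_d dist F0 M d (Kd dist M d).
Proof.
move=> n_gt0 hK; have KKd := Sigma_d_sub_Kd hK.
case: hK => [[[Kcl KF0] Kmin] dK].
have dHK i : dH dist K (M i) = (d i)%:E by rewrite -dK dH_Sigma.
pose i0 : 'I_n := Ordinal n_gt0.
have KdF0 : in_class dist F0 (Kd dist M d).
  apply: (in_class_sandwich hdist Kcl KF0 (Kd_closed hdist (M := M) (d := d)) KKd).
  - by move=> p Kdp; apply: (Kdp i0).
  - exact: (hM i0).1.2.
  - exact: (hM i0).2.
have dHKd_le i : dH dist (Kd dist M d) (M i) <= (d i)%:E.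
  apply: dH_le => [p Kdp|m Mm]; first exact: Kdp.
  by rewrite -dHK; apply: le_trans (le_dist_pt dist m KKd) (dH_ge_distr dist K Mm).
have KdSigma : Sigma dist F0 M (Kd dist M d).
  split => // Y YF0; apply: le_trans (Kmin Y YF0).
  by apply: lee_sum => i _; rewrite dHK.
split => //; have dHKd i := dH_Sigma i KdSigma.
have le_d i : (dvec dist M (Kd dist M d) i <= d i)%R.
  by rewrite -lee_fin -dHKd.
have sum_le : (\sum_i d i <= \sum_i dvec dist M (Kd dist M d) i)%R.
  rewrite -lee_fin -!sumEFin.
  under eq_bigr do rewrite -dHK; under [X in _ <= X]eq_bigr do rewrite -dHKd.
  exact: Kmin.
have /leif_sum eq_sum := fun i (_ : true) => leif_eq (le_d i).
apply/funext => i; apply/eqP.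
suff /forallP/(_ i) : [forall i, dvec dist M (Kd dist M d) i == d i] by [].
by rewrite -eq_sum.2 eq_le eq_sum.1 sum_le.
Qed.

End Minimizers.

Theorem mainTheorem11 (R : realType) (T : Type) (dist : T -> T -> R)
  (hdist : is_metric dist) (F0 : set T) (hF0 : PCl dist F0)
  (n : nat) (hn : (0 < n)%N) (M : 'I_n -> set T)
  (hM : forall i, in_class dist F0 (M i))
  (hSigma : Sigma dist F0 M !=set0)
  (d : 'I_n -> R) (hd : Omega dist F0 M d) :
  Sigma_d dist F0 M d (Kd dist M d) /\
  (forall K, Sigma_d dist F0 M d K -> K `<=` Kd dist M d).
Proof.
split; last by move=> K; apply: Sigma_d_sub_Kd.
by case: hd => K hK; apply: (Sigma_d_Kd hdist hF0 hM hn hK).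
Qed.
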